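(* Let $\theta$ be uniformly distributed on $[0,2\pi]$, let $k\in\{1,2,3\}$, $W=e^{-i\theta\sigma_k}$ and $G=\frac{\partial W}{\partial\theta}$. Let $A,C$ be arbitrary linear operators on $\mathbb{C}^2$ and let $B=D=\sigma_j$ for some $j\in\{0,1,2,3\}$. Then $$\mathbb{E}_\theta\,\text{Tr}[GAW^\dagger B]\,\text{Tr}[GCW^\dagger D]=\Big[\tfrac12-\tfrac{\delta_{j0}+\delta_{jk}}{2}\Big]\text{Tr}[AB]\,\text{Tr}[CD]+\Big[-\tfrac12-\tfrac{\delta_{j0}+\delta_{jk}}{2}\Big]\text{Tr}[AB\sigma_k]\,\text{Tr}[CD\sigma_k].$$
   Context: $\sigma_0=I$, $\sigma_1,\sigma_2,\sigma_3$ are the Pauli matrices $X,Y,Z$; $\delta$ is the Kronecker delta; $\mathbb{E}_\theta g=\frac1{2\pi}\int_0^{2\pi}g\,d\theta$. *)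

From Stdlib Require Import Reals.
From Coquelicot Require Import Hierarchy RInt.
From HB Require Import structures.
From mathcomp Require Import all_boot all_order all_algebra.
From mathcomp Require Import Rstruct complex.
Set Implicit Arguments. Unset Strict Implicit. Unset Printing Implicit Defensive.
Import Order.TTheory GRing.Theory Num.Theory.

Local Open Scope ring_scope.
Local Open Scope complex_scope.

Notation Cx := (complex R).

Definition iC : Cx := complex.Complex 0 1.

Definition pauliX : 'M[Cx]_2 := \matrix_(r, c) (if r == c then 0 else 1).
Definition pauliY : 'M[Cx]_2 :=
  \matrix_(r, c) (if r == c then 0 else if r == 0 then - iC else iC).
Definition pauliZ : 'M[Cx]_2 :=
  \matrix_(r, c) (if r == c then (if r == 0 then 1 else -1) else 0).
Definition pauli (a : 'I_4) : 'M[Cx]_2 :=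
  match val a with
  | 0%N => 1%:M
  | 1%N => pauliX
  | 2%N => pauliY
  | _ => pauliZ
  end.

Definition adj (M : 'M[Cx]_2) : 'M[Cx]_2 := (map_mx conjc M)^T.

Definition expSum (M : 'M[Cx]_2) (n : nat) : 'M[Cx]_2 :=
  \sum_(m < n) ((m`!)%:R)^-1 *: M ^+ m.
Definition is_mexp (M E : 'M[Cx]_2) : Prop :=
  forall r c : 'I_2,
    Un_cv (fun n => complex.Re (expSum M n r c)) (complex.Re (E r c)) /\
    Un_cv (fun n => complex.Im (expSum M n r c)) (complex.Im (E r c)).

Definition is_mderiv (W : R -> 'M[Cx]_2) (t : R) (D : 'M[Cx]_2) : Prop :=
  forall r c : 'I_2,
    derivable_pt_lim (fun s => complex.Re (W s r c)) t (complex.Re (D r c)) /\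
    derivable_pt_lim (fun s => complex.Im (W s r c)) t (complex.Im (D r c)).

Definition Etheta (g : R -> Cx) : Cx :=
  (Rinv (2 * PI) * @RInt Hierarchy.R_CompleteNormedModule (fun t => complex.Re (g t)) 0 (2 * PI))%R +i*
  (Rinv (2 * PI) * @RInt Hierarchy.R_CompleteNormedModule (fun t => complex.Im (g t)) 0 (2 * PI))%R.

(** Write S = sigma_k, so that S^2 = 1.  The exponential series splits by parity into
    W(t) = cos t - i sin t S, hence G(t) = -sin t - i cos t S and W(t)^+ = cos t + i sin t S,
    all in the span of 1 and S.  Since sigma_j commutes (delta = 1) or anticommutes
    (delta = 0) with S, the factor W^+ can be moved across B, and cyclicity of the trace
    leaves a single element of the span of 1 and S against AB:
      Tr[G A W^+ B] = -i delta Tr[ABS] + (delta-1) Tr[AB] sin 2t - i (1-delta) Tr[ABS] cos 2t.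
    Averaging a product of two such expressions only retains the constant terms and the
    squares of sin 2t and cos 2t, each with mean 1/2; with delta^2 = delta this gives the
    claimed coefficients. *)

From Stdlib Require Import Reals Lra Lia FunctionalExtensionality.
From Coquelicot Require Import Coquelicot.
Local Open Scope R_scope.

Lemma Un_cv_interleave (u v : nat -> R) (l : R) (s : nat) : Un_cv v l ->
  (forall q, u (q + q + s)%nat = v q /\ u (S (q + q + s)) = v q) -> Un_cv u l.
Proof.
intros Hv H eps He. destruct (Hv eps He) as [N HN]. exists (N + N + s)%nat. intros n Hn.
destruct (Nat.Even_or_Odd (n - s)) as [[q Hq]|[q Hq]].
- replace n with (q + q + s)%nat by lia. rewrite (proj1 (H q)). apply HN. lia.
- replace n with (S (q + q + s)) by lia. rewrite (proj2 (H q)). apply HN. lia.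
Qed.

Lemma cos_series_cv (t : R) :
  Un_cv (fun N => sum_f_R0 (fun i => cos_n i * (t * t) ^ i) N) (cos t).
Proof. unfold cos. destruct (exist_cos (Rsqr t)) as [l Hl]. exact Hl. Qed.

Lemma Un_cv_const (c : R) : Un_cv (fun _ => c) c.
Proof. intros eps He; exists 0%nat; intros; rewrite R_dist_eq; exact He. Qed.

Lemma sin_series_cv (t : R) :
  Un_cv (fun N => t * sum_f_R0 (fun i => sin_n i * (t * t) ^ i) N) (sin t).
Proof.
unfold sin. destruct (exist_sin (Rsqr t)) as [l Hl].
apply CV_mult; [apply Un_cv_const | exact Hl].
Qed.

Lemma Un_cv_lincomb (u v : nat -> R) (a b x y : R) : Un_cv u a -> Un_cv v b ->
  Un_cv (fun n => u n * x + v n * y) (a * x + b * y).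
Proof. intros Hu Hv; apply CV_plus; apply CV_mult; auto using Un_cv_const. Qed.

Lemma derivable_pt_lim_lincomb (f g : R -> R) (t f' g' x y : R) :
  derivable_pt_lim f t f' -> derivable_pt_lim g t g' ->
  derivable_pt_lim (fun u => f u * x + g u * y) t (f' * x + g' * y).
Proof.
intros Hf Hg; apply (derivable_pt_lim_plus (fun u => f u * x) (fun u => g u * y));
  apply derivable_pt_lim_scal_right; assumption.
Qed.

(* cos^2 - sin^2 rather than cos^2, so that the mean is the constant term alone. *)
Definition trig_poly (a b1 c1 b2 c2 t : R) : R :=
  a + b1 * sin (2 * t) + c1 * cos (2 * t) + b2 * (sin (2 * t) * cos (2 * t))
    + c2 * (cos (2 * t) * cos (2 * t) - sin (2 * t) * sin (2 * t)).

Lemma mean_trig_poly (a b1 c1 b2 c2 : R) :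
  / (2 * PI) * RInt (trig_poly a b1 c1 b2 c2) 0 (2 * PI) = a.
Proof.
set (F := fun t => a * t - b1 * cos (2 * t) / 2 + c1 * sin (2 * t) / 2
                   + b2 * (sin (2 * t) * sin (2 * t)) / 4
                   + c2 * (sin (2 * t) * cos (2 * t)) / 2).
rewrite (is_RInt_unique _ _ _ (minus (F (2 * PI)) (F 0))).
- unfold F, minus, plus, opp; simpl.
  replace (2 * (2 * PI)) with (0 + 2 * INR 2 * PI) by (simpl; ring).
  rewrite sin_period, cos_period, !Rmult_0_r, sin_0, cos_0.
  assert (H := PI_RGT_0); field; lra.
- apply (is_RInt_derive F).
  + intros x _; unfold F, trig_poly; auto_derive; [exact I | field].
  + intros x _; apply (ex_derive_continuous (K := R_AbsRing) (V := R_NormedModule)).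
    unfold trig_poly; auto_derive; exact I.
Qed.

Local Close Scope R_scope.

From mathcomp Require Import all_boot all_algebra.
From mathcomp Require Import Rstruct complex ring.
Import GRing.Theory Num.Theory.
Local Open Scope ring_scope.
Local Open Scope complex_scope.

Lemma iC_sqr : iC ^+ 2 = -1.
Proof. by rewrite expr2 /iC; simpc. Qed.

Lemma complex_ext (z w : Cx) :
  complex.Re z = complex.Re w -> complex.Im z = complex.Im w -> z = w.
Proof. by case: z w => [? ?] [? ?] /= -> ->. Qed.

Definition rotmx {n : nat} (c s : R) (S : 'M[Cx]_n.+1) : 'M[Cx]_n.+1 :=
  c%:C%:A - (iC * s%:C) *: S.

Lemma rotmxE {n : nat} (c s : R) (S : 'M[Cx]_n.+1) :
  rotmx c s S = c%:C%:A + (- (iC * s%:C)) *: S.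
Proof. by rewrite /rotmx scaleNr. Qed.

Lemma IZR_N1 : IZR (Zneg xH) = -1.
Proof. exact: (opp_IZR (Zpos xH)). Qed.

Section CosSinTaylor.
Variable t : R.

Definition cos_term (m : nat) : R :=
  if odd m then 0 else (-1) ^+ m./2 * t ^+ m / m`!%:R.
Definition sin_term (m : nat) : R :=
  if odd m then (-1) ^+ m./2 * t ^+ m / m`!%:R else 0.
Definition cos_psum (n : nat) : R := \sum_(m < n) cos_term m.
Definition sin_psum (n : nat) : R := \sum_(m < n) sin_term m.

Lemma cos_term_double i : cos_term i.*2 = cos_n i * pow (t * t) i.
Proof.
rewrite /cos_term odd_double doubleK /cos_n !RpowE INRE factE multE mul2n IZR_N1.
by rewrite RmultE -expr2 -exprM mul2n /= mulrAC.
Qed.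

Lemma sin_term_double_succ i : sin_term i.*2.+1 = t * (sin_n i * pow (t * t) i).
Proof.
rewrite /sin_term /= odd_double uphalf_double /sin_n !RpowE INRE factE multE plusE.
rewrite mul2n addn1 IZR_N1 RmultE -expr2 -exprM mul2n exprS /= RdivE; ring.
Qed.

Lemma cos_psum_double_succ q :
  cos_psum q.*2.+1 = sum_f_R0 (fun i => cos_n i * pow (t * t) i) q.
Proof.
elim: q => [|q IH].
  by rewrite /cos_psum big_ord_recr big_ord0 /= add0r -(cos_term_double 0).
rewrite {1}/cos_psum doubleS (big_ord_recr q.*2.+2) (big_ord_recr q.*2.+1) /= -/(cos_psum _).
by rewrite IH -doubleS cos_term_double /cos_term /= odd_double addr0.
Qed.

Lemma sin_psum_double q :
  sin_psum q.*2.+2 = t * sum_f_R0 (fun i => sin_n i * pow (t * t) i) q.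
Proof.
elim: q => [|q IH].
  rewrite /sin_psum !big_ord_recr big_ord0 /= add0r (sin_term_double_succ 0).
  by rewrite {1}/sin_term /= add0r.
rewrite {1}/sin_psum doubleS (big_ord_recr q.*2.+3) (big_ord_recr q.*2.+2) /= -/(sin_psum _).
by rewrite IH -doubleS sin_term_double_succ {1}/sin_term odd_double addr0 mulrDr.
Qed.

Lemma cos_psum_cv : Un_cv cos_psum (cos t).
Proof.
apply: (Un_cv_interleave _ _ _ 1 (cos_series_cv t)) => q.
rewrite !plusE addnn addn1.
have -> : cos_psum q.*2.+2 = cos_psum q.*2.+1.
  by rewrite /cos_psum big_ord_recr /= /cos_term /= odd_double addr0.
by split; exact: cos_psum_double_succ.
Qed.

Lemma sin_psum_cv : Un_cv sin_psum (sin t).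
Proof.
apply: (Un_cv_interleave _ _ _ 2 (sin_series_cv t)) => q.
rewrite !plusE addnn addn2.
have -> : sin_psum q.*2.+3 = sin_psum q.*2.+2.
  by rewrite /sin_psum big_ord_recr /= /sin_term /= odd_double addr0.
by split; exact: sin_psum_double.
Qed.

End CosSinTaylor.

Lemma rotmxD {n : nat} (c s c' s' : R) (S : 'M[Cx]_n.+1) :
  rotmx (c + c') (s + s') S = rotmx c s S + rotmx c' s' S.
Proof. by rewrite /rotmx !rmorphD mulrDr !scalerDl opprD addrACA. Qed.

Section Involution.
Context {n : nat} {S : 'M[Cx]_n.+1} (hSS : S * S = 1).

Lemma expr_involution m : S ^+ m = if odd m then S else 1.
Proof.
elim: m => [|m IH]; first by rewrite expr0.
by rewrite exprS IH /=; case: (odd m) => /=; rewrite ?hSS ?mulr1.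
Qed.

Lemma mul_span_involution (a b a' b' : Cx) :
  (a%:A + b *: S) * (a'%:A + b' *: S) = (a * a' + b * b')%:A + (a * b' + b * a') *: S.
Proof.
rewrite mulrDl !mulrDr !mulr_algl -!scalerAl mulr_algr -scalerAr hSS.
rewrite !scalerA !scalerDl -!addrA; congr (_ + _).
by rewrite [RHS]addrC -addrA.
Qed.

Lemma mxtrace_span_involution (a b : Cx) (X : 'M[Cx]_n.+1) :
  \tr ((a%:A + b *: S) * X) = a * \tr X + b * \tr (X * S).
Proof.
by rewrite mulrDl mulr_algl -scalerAl raddfD /= !mxtraceZ -!mulmxE mxtrace_mulC.
Qed.

Lemma mxtrace_twirl {B : 'M[Cx]_n.+1} {e : Cx} : S * B = e *: (B * S) ->
  forall (A : 'M[Cx]_n.+1) (a b a' b' : Cx),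
  \tr ((a%:A + b *: S) * A * (a'%:A + b' *: S) * B)
  = (a * a' + e * b * b') * \tr (A * B) + (b * a' + e * a * b') * \tr (A * B * S).
Proof.
move=> hSB A a b a' b'.
have commB : (a'%:A + b' *: S) * B = B * (a'%:A + (b' * e) *: S).
  by rewrite mulrDl mulrDr mulr_algl mulr_algr -scalerAl hSB -scalerAr scalerA.
rewrite -mulrA commB mulrA -!mulmxE mxtrace_mulC !mulmxE !mulrA mul_span_involution.
by rewrite -mulrA mxtrace_span_involution; ring.
Qed.

Lemma exp_term_involution (t : R) m :
  (m`!%:R)^-1 *: (- (iC * t%:C) *: S) ^+ m = rotmx (cos_term t m) (sin_term t m) S.
Proof.
have even_pow q : (- (iC * t%:C)) ^+ q.*2 = ((-1) ^+ q * t ^+ q.*2)%:C.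
  have sq : (- (iC * t%:C)) ^+ 2 = (- t ^+ 2)%:C.
    by rewrite sqrrN exprMn iC_sqr rmorphN rmorphXn mulN1r.
  have e : (- t ^+ 2) ^+ q = (-1) ^+ q * t ^+ (2 * q) :> R by rewrite [LHS]exprNn exprM.
  by rewrite -mul2n exprM sq -rmorphXn e.
have fact_neq0 k : (k`!%:R : Cx) != 0 by rewrite pnatr_eq0 -lt0n fact_gt0.
rewrite exprZn expr_involution scalerA /rotmx /cos_term /sin_term.
have [q [->|->]] : exists q, m = q.*2 \/ m = q.*2.+1.
  exists m./2; move: (odd_double_half m).
  by case: (odd m) => /= e; [right|left]; rewrite -{1}e ?add1n ?add0n.
- rewrite odd_double /= doubleK even_pow rmorph0 mulr0 scale0r subr0; congr (_ *: _).
  by rewrite !(rmorphM, fmorphV, rmorph_nat, rmorphXn, rmorphN, rmorph1); field.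
- rewrite /= odd_double /= uphalf_double exprS even_pow rmorph0 scale0r sub0r -scaleNr.
  congr (_ *: _).
  by rewrite !(rmorphM, fmorphV, rmorph_nat, rmorphXn, rmorphN, rmorph1) exprS; field.
Qed.

End Involution.

Lemma expSum_involution (S : 'M[Cx]_2) (t : R) n : S * S = 1 ->
  expSum (- (iC * t%:C) *: S) n = rotmx (cos_psum t n) (sin_psum t n) S.
Proof.
move=> hS; elim: n => [|n IH].
  by rewrite /expSum /cos_psum /sin_psum !big_ord0 /rotmx rmorph0 mulr0 !scale0r subr0.
rewrite /expSum big_ord_recr /= -/(expSum _ n) IH exp_term_involution //.
by rewrite /cos_psum /sin_psum !big_ord_recr -rotmxD.
Qed.

Lemma Re_rot (c s : R) (x z : Cx) :
  complex.Re (c%:C * x - iC * s%:C * z) = c * complex.Re x + s * complex.Im z.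
Proof. by case: x z => [? ?] [? ?]; rewrite /iC; simpc. Qed.

Lemma Im_rot (c s : R) (x z : Cx) :
  complex.Im (c%:C * x - iC * s%:C * z) = c * complex.Im x + s * - complex.Re z.
Proof. by case: x z => [? ?] [? ?]; rewrite /iC; simpc. Qed.

Lemma rotmx_entry {n : nat} (c s : R) (S : 'M[Cx]_n.+1) r q :
  rotmx c s S r q = c%:C * (r == q)%:R - iC * s%:C * S r q.
Proof. by rewrite !mxE. Qed.

Lemma is_mexp_rotmx {M S E : 'M[Cx]_2} {cn sn : nat -> R} {c s : R} :
  (forall n, expSum M n = rotmx (cn n) (sn n) S) -> Un_cv cn c -> Un_cv sn s ->
  is_mexp M E -> E = rotmx c s S.
Proof.
move=> hM hc hs hE; apply/matrixP => r q; have [hRe hIm] := hE r q.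
rewrite rotmx_entry; apply: complex_ext; rewrite ?Re_rot ?Im_rot.
- apply: (UL_sequence _ _ _ hRe); apply: Un_cv_ext (Un_cv_lincomb _ _ _ _ _ _ hc hs) => n.
  by rewrite hM rotmx_entry Re_rot.
- apply: (UL_sequence _ _ _ hIm); apply: Un_cv_ext (Un_cv_lincomb _ _ _ _ _ _ hc hs) => n.
  by rewrite hM rotmx_entry Im_rot.
Qed.

Lemma is_mexp_involution {S E : 'M[Cx]_2} {t : R} : S * S = 1 ->
  is_mexp (- (iC * t%:C) *: S) E -> E = rotmx (cos t) (sin t) S.
Proof.
move=> hS; apply: (is_mexp_rotmx _ (cos_psum_cv t) (sin_psum_cv t)) => n.
exact: expSum_involution.
Qed.

Lemma is_mderiv_rotmx {S G0 : 'M[Cx]_2} {f g : R -> R} {t f' g' : R} :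
  derivable_pt_lim f t f' -> derivable_pt_lim g t g' ->
  is_mderiv (fun u => rotmx (f u) (g u) S) t G0 -> G0 = rotmx f' g' S.
Proof.
move=> hf hg hG; apply/matrixP => r q; have [hRe hIm] := hG r q.
rewrite rotmx_entry; apply: complex_ext; rewrite ?Re_rot ?Im_rot.
- apply: (uniqueness_limite _ _ _ _ hRe).
  under [fun u => _]functional_extensionality => u do rewrite rotmx_entry Re_rot.
  exact: derivable_pt_lim_lincomb.
- apply: (uniqueness_limite _ _ _ _ hIm).
  under [fun u => _]functional_extensionality => u do rewrite rotmx_entry Im_rot.
  exact: derivable_pt_lim_lincomb.
Qed.

Lemma adj_rotmx (c s : R) (S : 'M[Cx]_2) :
  adj S = S -> adj (rotmx c s S) = rotmx c (- s) S.
Proof.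
rewrite /adj /rotmx => hS.
rewrite map_mxB !map_mxZ map_mx1 linearB !linearZ /= trmx1 hS.
by congr (_ *: _ + _ *: _); rewrite /iC; simpc.
Qed.

Lemma sin_sqrC (u : R) : (sin u)%:C ^+ 2 = 1 - (cos u)%:C ^+ 2.
Proof.
have h := sin2_cos2 u; rewrite /Rsqr RplusE !RmultE in h.
rewrite (_ : 1 = (1 : R)%:C) // -!rmorphXn -rmorphB -h !expr2.
by congr (_%:C); ring.
Qed.

Lemma sin_2aC (u : R) : (sin (2 * u))%:C = 2 * (sin u)%:C * (cos u)%:C.
Proof. by rewrite sin_2a !RmultE !rmorphM IZRposE INRE rmorph_nat. Qed.

Lemma cos_2aC (u : R) : (cos (2 * u))%:C = (cos u)%:C ^+ 2 - (sin u)%:C ^+ 2.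
Proof. by rewrite cos_2a RminusE !RmultE rmorphB !rmorphM !expr2. Qed.

Lemma mxtrace_twirl_rotmx {n : nat} {S B : 'M[Cx]_n.+1} {delta : Cx} :
  S * S = 1 -> S * B = (2 * delta - 1) *: (B * S) -> forall (A : 'M[Cx]_n.+1) (t : R),
  \tr (rotmx (- sin t) (cos t) S * A * rotmx (cos t) (- sin t) S * B)
  = - iC * delta * \tr (A * B * S) + (delta - 1) * \tr (A * B) * (sin (2 * t))%:C
    + - iC * (1 - delta) * \tr (A * B * S) * (cos (2 * t))%:C.
Proof.
move=> hSS hSB A t; rewrite !rotmxE (mxtrace_twirl hSS hSB) sin_2aC cos_2aC.
have -> : ((- sin t)%R)%:C = - (sin t)%:C by apply: complex_ext; rewrite /= ?oppr0.
have := sin_sqrC t; move: (sin t)%:C (cos t)%:C => s c hs.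
by ring: hs iC_sqr.
Qed.

Lemma Etheta_trig_poly (K0 K1 K2 K3 K4 : Cx) :
  Etheta (fun t => K0 + K1 * (sin (2 * t))%:C + K2 * (cos (2 * t))%:C
                   + K3 * ((sin (2 * t))%:C * (cos (2 * t))%:C)
                   + K4 * ((cos (2 * t))%:C ^+ 2 - (sin (2 * t))%:C ^+ 2))
  = K0.
Proof.
rewrite /Etheta.
have -> : (fun t => complex.Re (K0 + K1 * (sin (2 * t))%:C + K2 * (cos (2 * t))%:C
                   + K3 * ((sin (2 * t))%:C * (cos (2 * t))%:C)
                   + K4 * ((cos (2 * t))%:C ^+ 2 - (sin (2 * t))%:C ^+ 2)))
  = trig_poly (complex.Re K0) (complex.Re K1) (complex.Re K2) (complex.Re K3) (complex.Re K4).
  apply: functional_extensionality => t; rewrite /trig_poly.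
  by case: K0 K1 K2 K3 K4 => [? ?] [? ?] [? ?] [? ?] [? ?]; simpc.
have -> : (fun t => complex.Im (K0 + K1 * (sin (2 * t))%:C + K2 * (cos (2 * t))%:C
                   + K3 * ((sin (2 * t))%:C * (cos (2 * t))%:C)
                   + K4 * ((cos (2 * t))%:C ^+ 2 - (sin (2 * t))%:C ^+ 2)))
  = trig_poly (complex.Im K0) (complex.Im K1) (complex.Im K2) (complex.Im K3) (complex.Im K4).
  apply: functional_extensionality => t; rewrite /trig_poly.
  by case: K0 K1 K2 K3 K4 => [? ?] [? ?] [? ?] [? ?] [? ?]; simpc.
by rewrite -!RmultE !mean_trig_poly; case: K0.
Qed.

Lemma Etheta_double_angle_product (z x y z' x' y' : Cx) :
  Etheta (fun t => (z + x * (sin (2 * t))%:C + y * (cos (2 * t))%:C)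
                 * (z' + x' * (sin (2 * t))%:C + y' * (cos (2 * t))%:C))
  = z * z' + (x * x' + y * y') / 2.
Proof.
rewrite -[RHS](Etheta_trig_poly _ (z * x' + x * z') (z * y' + y * z') (x * y' + y * x')
                                  ((y * y' - x * x') / 2)).
congr Etheta; apply: functional_extensionality => t.
have := sin_sqrC (2 * t).
move: (sin (2 * t))%:C (cos (2 * t))%:C => s c hsc.
by field: hsc.
Qed.

Definition pauli_delta (k j : 'I_4) : Cx := (j == 0%N :> nat)%:R + (j == k)%:R.

Ltac pauli_entries :=
  rewrite /pauli /pauliX /pauliY /pauliZ /=; apply/matrixP;
  case=> [[|[|?]] ?]; case=> [[|[|?]] ?] //;
  rewrite !mxE ?big_ord_recl ?big_ord0 ?mxE /=.

Lemma pauli_sqr {k : 'I_4} : k != 0%N :> nat -> pauli k * pauli k = 1.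
Proof. by case: k => [[|[|[|[|?]]]] ?] //= _; pauli_entries; ring: iC_sqr. Qed.

Lemma adj_pauli (k : 'I_4) : adj (pauli k) = pauli k.
Proof.
by case: k => [[|[|[|[|?]]]] ?] //; rewrite /adj; pauli_entries; rewrite /iC; simpc.
Qed.

Lemma pauli_commute {k : 'I_4} (j : 'I_4) : k != 0%N :> nat ->
  pauli k * pauli j = (2 * pauli_delta k j - 1) *: (pauli j * pauli k).
Proof.
case: k => [[|[|[|[|?]]]] ?] //= _; case: j => [[|[|[|[|?]]]] ?] //;
  rewrite /pauli_delta /=; pauli_entries; ring: iC_sqr.
Qed.

Lemma pauli_delta_idem {k : 'I_4} (j : 'I_4) : k != 0%N :> nat ->
  pauli_delta k j ^+ 2 = pauli_delta k j.
Proof.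
by case: k => [[|[|[|[|?]]]] ?] //= _; case: j => [[|[|[|[|?]]]] ?] //;
  rewrite /pauli_delta /=; ring.
Qed.

Theorem lemma4 (k j : 'I_4) (hk : k != 0%N :> nat)
  (A C : 'M[Cx]_2) (W G : R -> 'M[Cx]_2)
  (hW : forall t : R, is_mexp (- (iC * t%:C) *: pauli k) (W t))
  (hG : forall t : R, is_mderiv W t (G t)) :
  let B := pauli j in
  let D := pauli j in
  let delta := ((j == 0%N :> nat)%:R + (j == k)%:R : Cx) in
  Etheta (fun t => \tr (G t *m A *m adj (W t) *m B) *
                   \tr (G t *m C *m adj (W t) *m D))
  = (2^-1 - delta / 2) * \tr (A *m B) * \tr (C *m D)
    + (- 2^-1 - delta / 2) * \tr (A *m B *m pauli k) * \tr (C *m D *m pauli k).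
Proof.
move=> B D delta.
have hS := pauli_sqr hk.
have hW' t : W t = rotmx (cos t) (sin t) (pauli k) := is_mexp_involution hS (hW t).
have hG' t : G t = rotmx (- sin t) (cos t) (pauli k).
  apply: (is_mderiv_rotmx (derivable_pt_lim_cos t) (derivable_pt_lim_sin t)).
  by rewrite -(functional_extensionality _ _ hW').
have htr X t : \tr (G t *m X *m adj (W t) *m B)
    = - iC * delta * \tr (X * B * pauli k) + (delta - 1) * \tr (X * B) * (sin (2 * t))%:C
      + - iC * (1 - delta) * \tr (X * B * pauli k) * (cos (2 * t))%:C.
  rewrite hG' hW' adj_rotmx ?adj_pauli // !mulmxE.
  exact: (mxtrace_twirl_rotmx hS (pauli_commute j hk)).
under [fun t => _]functional_extensionality => t do rewrite /D !htr.
rewrite Etheta_double_angle_product !mulmxE.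
have delta_idem : delta ^+ 2 = delta := pauli_delta_idem j hk.
by field: delta_idem iC_sqr.
Qed.
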